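(* The Kahan map $\mathcal K$, $\tilde x_i=x_i\dfrac{(1-\epsilon H)(1+\epsilon H)}{(1-\epsilon H+2\epsilon v_{i-1})(1-\epsilon H+2\epsilon v_i)}$ ($i=1,\dots,n$), is a Poisson map with respect to the bracket $\{x_i,x_j\}=x_ix_j$ ($i<j$); that is, $\{\tilde x_i,\tilde x_j\}=\tilde x_i\tilde x_j$ for all $1\le i<j\le n$.
   Context: $(a_1,\dots,a_n)\in\mathbb R^n\setminus\{0\}$, $\epsilon>0$, $H=a_1x_1+\dots+a_nx_n$, $v_0:=0$, $v_i:=a_1x_1+\dots+a_ix_i$. The Poisson bracket on $\mathbb R^n$ is $\{x_i,x_j\}=x_ix_j$ for $1\le i<j\le n$, extended by skew-symmetry and the Leibniz rule to rational functions. *)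

From Stdlib Require Import Reals.
Open Scope R_scope.

(* Points of R^n are represented as x : nat -> R, coordinates x 1, ..., x n
   (1-based, matching the paper); values at other indices are irrelevant. *)

Fixpoint sumR (m : nat) (f : nat -> R) : R :=
  match m with
  | O => 0
  | S m' => sumR m' f + f (S m')
  end.

Definition v (a : nat -> R) (i : nat) (x : nat -> R) : R :=
  sumR i (fun k => a k * x k).

Definition Ham (n : nat) (a : nat -> R) (x : nat -> R) : R := v a n x.

Definition kahan (n : nat) (a : nat -> R) (eps : R) (i : nat) (x : nat -> R) : R :=
  x i * ((1 - eps * Ham n a x) * (1 + eps * Ham n a x)) /
  ((1 - eps * Ham n a x + 2 * eps * v a (i - 1) x) *
   (1 - eps * Ham n a x + 2 * eps * v a i x)).

Definition update (x : nat -> R) (k : nat) (t : R) : nat -> R :=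
  fun m => if Nat.eqb m k then t else x m.

Definition has_partial (f : (nat -> R) -> R) (x : nat -> R) (k : nat) (Df : R) : Prop :=
  derivable_pt_lim (fun t => f (update x k t)) (x k) Df.

(* This is the unique
   biderivation extending {x_k,x_l} = x_k x_l (k<l) by skew-symmetry and Leibniz. *)
Definition pbracket (n : nat) (x : nat -> R) (Df Dg : nat -> R) : R :=
  sumR n (fun k => sumR n (fun l =>
    if Nat.ltb k l then x k * x l * (Df k * Dg l - Df l * Dg k) else 0)).

(* The bracket {f,g} is bilinear in the gradients of f and g, and the i-th
   Kahan component is a rational function of only four quantities:
   x_i, H, v_(i-1) and v_i.  So by the chain rule {x~_i, x~_j} is a
   combination of the brackets among x_i, x_j, H and the v_m, which form a
   closed table: {x_i, x_j} = x_i x_j (i < j), {x_i, v_m} = x_i (v_m - v_i -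
   v_(i-1)) (i <= m), {x_i, v_m} = - x_i v_m (m < i) and
   {v_m, v_p} = v_m (v_p - v_m) (m <= p), the last one by telescoping
   a_k x_k (v_k + v_(k-1)) = v_k^2 - v_(k-1)^2.  Substituting the table
   leaves a rational identity. *)

From Stdlib Require Import Reals Lia Lra Bool.
From Coquelicot Require Import Coquelicot.
Open Scope R_scope.

Lemma sumR_ext m f g : (forall k, (1 <= k <= m)%nat -> f k = g k) ->
  sumR m f = sumR m g.
Proof.
  induction m as [|m IH]; intros Hfg; simpl; [reflexivity|].
  rewrite IH, Hfg by (lia || (intros; apply Hfg; lia)). reflexivity.
Qed.

Lemma sumR_lincomb m c1 c2 f g :
  sumR m (fun k => c1 * f k + c2 * g k) = c1 * sumR m f + c2 * sumR m g.
Proof. induction m as [|m IH]; simpl; [ring|rewrite IH; ring]. Qed.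

Lemma sumR_lincomb4 m c1 c2 c3 c4 f1 f2 f3 f4 :
  sumR m (fun k => c1 * f1 k + c2 * f2 k + c3 * f3 k + c4 * f4 k) =
  c1 * sumR m f1 + c2 * sumR m f2 + c3 * sumR m f3 + c4 * sumR m f4.
Proof. induction m as [|m IH]; simpl; [ring|rewrite IH; ring]. Qed.

Lemma sumR_zero m : sumR m (fun _ => 0) = 0.
Proof. induction m as [|m IH]; simpl; [ring|rewrite IH; ring]. Qed.

Lemma sumR_comm n m F :
  sumR n (fun k => sumR m (fun l => F k l)) = sumR m (fun l => sumR n (fun k => F k l)).
Proof.
  induction n as [|n IH]; simpl.
  - now rewrite sumR_zero.
  - rewrite IH.
    transitivity (sumR m (fun l => 1 * sumR n (fun k => F k l) + 1 * F (S n) l)).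
    + now rewrite sumR_lincomb, !Rmult_1_l.
    + apply sumR_ext. intros; ring.
Qed.

Lemma sumR_delta m i c : (1 <= i <= m)%nat ->
  sumR m (fun k => if k =? i then c k else 0) = c i.
Proof.
  induction m as [|m IH]; intros Hi; [lia|]. cbn [sumR].
  destruct (Nat.eqb_spec (S m) i) as [<-|Hne].
  - rewrite (sumR_ext _ _ (fun _ => 0)), sumR_zero; [ring|].
    intros k Hk. destruct (Nat.eqb_spec k (S m)); [lia|reflexivity].
  - rewrite IH by lia. ring.
Qed.

Lemma sumR_prefix m q w : (q <= m)%nat ->
  sumR m (fun l => if l <=? q then w l else 0) = sumR q w.
Proof.
  induction m as [|m IH]; intros Hq.
  - replace q with 0%nat by lia. reflexivity.
  - destruct (Nat.eq_dec q (S m)) as [->|Hne].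
    + apply sumR_ext. intros k Hk. destruct (Nat.leb_spec k (S m)); [reflexivity|lia].
    + cbn [sumR]. rewrite IH by lia. destruct (Nat.leb_spec (S m) q); [lia|ring].
Qed.

Lemma sumR_interval m p q w : (p <= q <= m)%nat ->
  sumR m (fun l => if (p <? l) && (l <=? q) then w l else 0) = sumR q w - sumR p w.
Proof.
  intros Hpq. rewrite <- (sumR_prefix m q w), <- (sumR_prefix m p w) by lia.
  transitivity (sumR m (fun l => 1 * (if l <=? q then w l else 0)
                               + (-1) * (if l <=? p then w l else 0))).
  - apply sumR_ext. intros k _.
    destruct (Nat.ltb_spec p k), (Nat.leb_spec k q), (Nat.leb_spec k p);
      simpl; try lia; ring.
  - rewrite sumR_lincomb. ring.
Qed.

Lemma v_succ a x m : v a (S m) x = v a m x + a (S m) * x (S m).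
Proof. reflexivity. Qed.

Lemma v_sq_telescope a x m :
  sumR m (fun k => a k * x k * (v a k x + v a (k - 1) x)) = v a m x * v a m x.
Proof.
  induction m as [|m IH]; [unfold v; simpl; ring|].
  cbn [sumR]. rewrite IH, v_succ. replace (S m - 1)%nat with m by lia. ring.
Qed.

Lemma pbracket_ext n x f f' g g' :
  (forall k, (1 <= k <= n)%nat -> f k = f' k) ->
  (forall k, (1 <= k <= n)%nat -> g k = g' k) ->
  pbracket n x f g = pbracket n x f' g'.
Proof.
  intros Hf Hg. apply sumR_ext; intros k Hk. apply sumR_ext; intros l Hl.
  now rewrite Hf, Hg, Hf, Hg by lia.
Qed.

Lemma pbracket_anti n x f g : pbracket n x g f = - pbracket n x f g.
Proof.
  unfold pbracket.
  transitivity ((-1) * sumR n (fun k => sumR n (fun l =>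
      if k <? l then x k * x l * (f k * g l - f l * g k) else 0))
    + 0 * sumR n (fun _ => 0)); [|ring].
  rewrite <- sumR_lincomb. apply sumR_ext; intros k _.
  transitivity ((-1) * sumR n (fun l => if k <? l then x k * x l * (f k * g l - f l * g k) else 0)
    + 0 * sumR n (fun _ => 0)).
  - rewrite <- sumR_lincomb. apply sumR_ext; intros l _. destruct (k <? l); ring.
  - ring.
Qed.

Lemma pbracket_expand n x f g : pbracket n x f g =
  sumR n (fun k => f k * x k * (sumR n (fun l => if k <? l then x l * g l else 0)
                               - sumR n (fun l => if l <? k then x l * g l else 0))).
Proof.
  unfold pbracket.
  transitivity (1 * sumR n (fun k => sumR n (fun l => if k <? l then x k * x l * f k * g l else 0))
     + (-1) * sumR n (fun k => sumR n (fun l => if k <? l then x k * x l * f l * g k else 0))).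
  - rewrite <- sumR_lincomb. apply sumR_ext; intros k _.
    rewrite <- sumR_lincomb. apply sumR_ext; intros l _. destruct (k <? l); ring.
  - rewrite (sumR_comm n n (fun k l => if k <? l then x k * x l * f l * g k else 0)).
    rewrite <- sumR_lincomb. apply sumR_ext; intros k _.
    transitivity ((f k * x k) * sumR n (fun l => if k <? l then x l * g l else 0)
      + (- (f k * x k)) * sumR n (fun l => if l <? k then x l * g l else 0)); [|ring].
    rewrite <- !sumR_lincomb. apply sumR_ext; intros l _.
    destruct (k <? l), (l <? k); ring.
Qed.

Definition lincomb4 (c1 c2 c3 c4 : R) (f1 f2 f3 f4 : nat -> R) (k : nat) : R :=
  c1 * f1 k + c2 * f2 k + c3 * f3 k + c4 * f4 k.

Lemma pbracket_lincomb4_l n x c1 c2 c3 c4 f1 f2 f3 f4 g :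
  pbracket n x (lincomb4 c1 c2 c3 c4 f1 f2 f3 f4) g =
  c1 * pbracket n x f1 g + c2 * pbracket n x f2 g
  + c3 * pbracket n x f3 g + c4 * pbracket n x f4 g.
Proof.
  unfold pbracket. rewrite <- sumR_lincomb4. apply sumR_ext; intros k _.
  rewrite <- sumR_lincomb4. apply sumR_ext; intros l _.
  unfold lincomb4. destruct (k <? l); ring.
Qed.

Lemma pbracket_lincomb4_r n x c1 c2 c3 c4 f1 f2 f3 f4 g :
  pbracket n x g (lincomb4 c1 c2 c3 c4 f1 f2 f3 f4) =
  c1 * pbracket n x g f1 + c2 * pbracket n x g f2
  + c3 * pbracket n x g f3 + c4 * pbracket n x g f4.
Proof.
  rewrite pbracket_anti, pbracket_lincomb4_l, !(pbracket_anti n x g). ring.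
Qed.

Definition coord_grad (i : nat) : nat -> R := fun k => if k =? i then 1 else 0.

Definition v_grad (a : nat -> R) (m : nat) : nat -> R :=
  fun k => if k <=? m then a k else 0.

Lemma pbracket_coord_grad_l n x i g : (1 <= i <= n)%nat ->
  pbracket n x (coord_grad i) g =
  x i * (sumR n (fun l => if i <? l then x l * g l else 0)
         - sumR n (fun l => if l <? i then x l * g l else 0)).
Proof.
  intros Hi. rewrite pbracket_expand.
  rewrite <- (sumR_delta n i (fun k => x k * (sumR n (fun l => if k <? l then x l * g l else 0)
                                 - sumR n (fun l => if l <? k then x l * g l else 0)))) by lia.
  apply sumR_ext; intros k _. unfold coord_grad. destruct (k =? i); ring.
Qed.

Lemma pbracket_coord_coord n x i j : (1 <= i < j)%nat -> (j <= n)%nat ->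
  pbracket n x (coord_grad i) (coord_grad j) = x i * x j.
Proof.
  intros Hij Hjn. rewrite pbracket_coord_grad_l by lia.
  rewrite (sumR_ext _ _ (fun l => if l =? j then x l else 0)).
  2:{ intros l _. unfold coord_grad.
      destruct (Nat.eqb_spec l j), (Nat.ltb_spec i l); try lia; ring. }
  rewrite (sumR_ext _ (fun l => if l <? i then x l * coord_grad j l else 0) (fun _ => 0)).
  2:{ intros l _. unfold coord_grad.
      destruct (Nat.eqb_spec l j), (Nat.ltb_spec l i); try lia; ring. }
  rewrite sumR_delta, sumR_zero by lia. ring.
Qed.

Lemma sumR_after_v_grad n x a i m : (i <= m <= n)%nat ->
  sumR n (fun l => if i <? l then x l * v_grad a m l else 0) = v a m x - v a i x.
Proof.
  intros Him. unfold v. rewrite <- (sumR_interval n i m) by lia.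
  apply sumR_ext; intros l _. unfold v_grad.
  destruct (Nat.ltb_spec i l), (Nat.leb_spec l m); simpl; ring.
Qed.

Lemma sumR_before_v_grad n x a i m : (1 <= i)%nat -> (i <= m <= n)%nat ->
  sumR n (fun l => if l <? i then x l * v_grad a m l else 0) = v a (i - 1) x.
Proof.
  intros Hi Him. unfold v.
  replace (sumR (i - 1) _) with (sumR (i - 1) (fun k => a k * x k) - sumR 0 (fun k => a k * x k))
    by (simpl; ring).
  rewrite <- (sumR_interval n 0 (i - 1)) by lia.
  apply sumR_ext; intros l Hl. unfold v_grad.
  destruct (Nat.ltb_spec l i), (Nat.leb_spec l m), (Nat.ltb_spec 0 l), (Nat.leb_spec l (i - 1));
    simpl; try lia; ring.
Qed.

Lemma pbracket_coord_v_ge n x a i m : (1 <= i)%nat -> (i <= m <= n)%nat ->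
  pbracket n x (coord_grad i) (v_grad a m) = x i * (v a m x - v a i x - v a (i - 1) x).
Proof.
  intros Hi Him. rewrite pbracket_coord_grad_l, sumR_after_v_grad, sumR_before_v_grad by lia.
  ring.
Qed.

Lemma pbracket_coord_v_lt n x a i m : (1 <= i <= n)%nat -> (m < i)%nat ->
  pbracket n x (coord_grad i) (v_grad a m) = - x i * v a m x.
Proof.
  intros Hi Hmi. rewrite pbracket_coord_grad_l by lia.
  rewrite (sumR_ext _ (fun l => if i <? l then x l * v_grad a m l else 0) (fun _ => 0)).
  2:{ intros l _. unfold v_grad.
      destruct (Nat.ltb_spec i l), (Nat.leb_spec l m); try lia; ring. }
  rewrite (sumR_ext _ (fun l => if l <? i then x l * v_grad a m l else 0)
                      (fun l => if l <=? m then a l * x l else 0)).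
  2:{ intros l _. unfold v_grad.
      destruct (Nat.ltb_spec l i), (Nat.leb_spec l m); try lia; ring. }
  rewrite sumR_zero, sumR_prefix by lia. unfold v. ring.
Qed.

Lemma pbracket_v_v n x a m p : (m <= p <= n)%nat ->
  pbracket n x (v_grad a m) (v_grad a p) = v a m x * (v a p x - v a m x).
Proof.
  intros Hmp. rewrite pbracket_expand.
  rewrite (sumR_ext _ _ (fun k => if k <=? m
             then a k * x k * (v a p x - (v a k x + v a (k - 1) x)) else 0)).
  2:{ intros k Hk. unfold v_grad at 1. destruct (Nat.leb_spec k m); [|ring].
      rewrite sumR_after_v_grad, sumR_before_v_grad by lia. ring. }
  rewrite sumR_prefix by lia.
  transitivity (v a p x * sumR m (fun k => a k * x k)
     + (-1) * sumR m (fun k => a k * x k * (v a k x + v a (k - 1) x))).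
  - rewrite <- sumR_lincomb. apply sumR_ext; intros; ring.
  - rewrite v_sq_telescope. fold (v a m x). ring.
Qed.

Lemma v_update a x k t m : (1 <= k)%nat ->
  v a m (update x k t) = v a m x + v_grad a m k * (t - x k).
Proof.
  intros Hk. induction m as [|m IH].
  - unfold v, v_grad; simpl. destruct (Nat.leb_spec k 0); [lia|ring].
  - rewrite !v_succ, IH. unfold v_grad, update.
    destruct (Nat.eqb_spec (S m) k), (Nat.leb_spec k m), (Nat.leb_spec k (S m));
      try lia; subst; ring.
Qed.

Lemma update_coord x k t i : update x k t i = x i + coord_grad i k * (t - x k).
Proof.
  unfold update, coord_grad. rewrite Nat.eqb_sym. destruct (Nat.eqb_spec k i); subst; ring.
Qed.

Definition kahanF (eps X H V1 V2 : R) : R :=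
  X * ((1 - eps * H) * (1 + eps * H)) /
  ((1 - eps * H + 2 * eps * V1) * (1 - eps * H + 2 * eps * V2)).

Definition kahanF_dX (eps X H V1 V2 : R) : R :=
  (1 - eps * H) * (1 + eps * H) / ((1 - eps * H + 2 * eps * V1) * (1 - eps * H + 2 * eps * V2)).

Definition kahanF_dH (eps X H V1 V2 : R) : R :=
  X * (-2 * eps * eps * H / ((1 - eps * H + 2 * eps * V1) * (1 - eps * H + 2 * eps * V2))
   + eps * ((1 - eps * H) * (1 + eps * H)) /
       ((1 - eps * H + 2 * eps * V1) * (1 - eps * H + 2 * eps * V1) * (1 - eps * H + 2 * eps * V2))
   + eps * ((1 - eps * H) * (1 + eps * H)) /
       ((1 - eps * H + 2 * eps * V1) * (1 - eps * H + 2 * eps * V2) * (1 - eps * H + 2 * eps * V2))).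

Definition kahanF_dV1 (eps X H V1 V2 : R) : R :=
  - (X * ((1 - eps * H) * (1 + eps * H)) * 2 * eps) /
  ((1 - eps * H + 2 * eps * V1) * (1 - eps * H + 2 * eps * V1) * (1 - eps * H + 2 * eps * V2)).

Definition kahanF_dV2 (eps X H V1 V2 : R) : R :=
  - (X * ((1 - eps * H) * (1 + eps * H)) * 2 * eps) /
  ((1 - eps * H + 2 * eps * V1) * (1 - eps * H + 2 * eps * V2) * (1 - eps * H + 2 * eps * V2)).

Lemma kahanF_affine_deriv eps X H V1 V2 cX cH c1 c2 y :
  1 - eps * H + 2 * eps * V1 <> 0 -> 1 - eps * H + 2 * eps * V2 <> 0 ->
  derivable_pt_lim
    (fun t => kahanF eps (X + cX * (t - y)) (H + cH * (t - y)) (V1 + c1 * (t - y)) (V2 + c2 * (t - y)))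
    y (cX * kahanF_dX eps X H V1 V2 + cH * kahanF_dH eps X H V1 V2
       + c1 * kahanF_dV1 eps X H V1 V2 + c2 * kahanF_dV2 eps X H V1 V2).
Proof.
  intros h1 h2. apply is_derive_Reals. unfold kahanF.
  auto_derive; replace (y + - y) with 0 by ring.
  - rewrite !Rmult_0_r, !Rplus_0_r. apply Rmult_integral_contrapositive; split; lra.
  - unfold kahanF_dX, kahanF_dH, kahanF_dV1, kahanF_dV2. field. split; assumption.
Qed.

Definition kahan_grad n a eps x i : nat -> R :=
  let F := fun dF => dF eps (x i) (Ham n a x) (v a (i - 1) x) (v a i x) in
  lincomb4 (F kahanF_dX) (F kahanF_dH) (F kahanF_dV1) (F kahanF_dV2)
    (coord_grad i) (v_grad a n) (v_grad a (i - 1)) (v_grad a i).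

Lemma kahan_kahanF n a eps i x :
  kahan n a eps i x = kahanF eps (x i) (Ham n a x) (v a (i - 1) x) (v a i x).
Proof. reflexivity. Qed.

Lemma has_partial_kahan n a eps x i k :
  1 - eps * Ham n a x + 2 * eps * v a (i - 1) x <> 0 ->
  1 - eps * Ham n a x + 2 * eps * v a i x <> 0 ->
  (1 <= k)%nat ->
  has_partial (kahan n a eps i) x k (kahan_grad n a eps x i k).
Proof.
  intros h1 h2 Hk. unfold has_partial. apply is_derive_Reals.
  apply (is_derive_ext (fun t => kahanF eps
      (x i + coord_grad i k * (t - x k)) (Ham n a x + v_grad a n k * (t - x k))
      (v a (i - 1) x + v_grad a (i - 1) k * (t - x k)) (v a i x + v_grad a i k * (t - x k)))).
  { intros t. rewrite kahan_kahanF. unfold Ham.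
    now rewrite !v_update, update_coord by exact Hk. }
  apply is_derive_Reals. unfold kahan_grad, lincomb4.
  rewrite !(Rmult_comm (_ eps (x i) _ _ _)).
  exact (kahanF_affine_deriv _ _ _ _ _ _ _ _ _ _ h1 h2).
Qed.

Lemma pbracket_kahan_grad n a eps x i j : (1 <= i < j)%nat -> (j <= n)%nat ->
  1 - eps * Ham n a x + 2 * eps * v a (i - 1) x <> 0 ->
  1 - eps * Ham n a x + 2 * eps * v a i x <> 0 ->
  1 - eps * Ham n a x + 2 * eps * v a (j - 1) x <> 0 ->
  1 - eps * Ham n a x + 2 * eps * v a j x <> 0 ->
  pbracket n x (kahan_grad n a eps x i) (kahan_grad n a eps x j) =
  kahan n a eps i x * kahan n a eps j x.
Proof.
  intros Hij Hjn h1 h2 h3 h4. unfold kahan_grad.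
  rewrite pbracket_lincomb4_l, !pbracket_lincomb4_r.
  rewrite (pbracket_coord_coord n x i j),
    (pbracket_coord_v_ge n x a i n), (pbracket_coord_v_ge n x a i (j - 1)),
    (pbracket_coord_v_ge n x a i j) by lia.
  rewrite !(pbracket_anti n x (coord_grad j)), (pbracket_coord_v_ge n x a j n),
    (pbracket_coord_v_lt n x a j (i - 1)), (pbracket_coord_v_lt n x a j i) by lia.
  rewrite (pbracket_anti n x (v_grad a (j - 1)) (v_grad a n)),
    (pbracket_anti n x (v_grad a j) (v_grad a n)).
  rewrite !(pbracket_v_v n x a) by lia.
  rewrite !kahan_kahanF. unfold Ham in *.
  unfold kahanF, kahanF_dX, kahanF_dH, kahanF_dV1, kahanF_dV2.
  field. repeat split; assumption.
Qed.

Theorem proposition3p2 (n : nat) (a : nat -> R) (eps : R)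
  (heps : 0 < eps)
  (ha : exists k, (1 <= k <= n)%nat /\ a k <> 0)
  (x : nat -> R)
  (hdom : forall k, (k <= n)%nat -> 1 - eps * Ham n a x + 2 * eps * v a k x <> 0)
  (i j : nat) (hij : (1 <= i < j)%nat) (hjn : (j <= n)%nat) :
  (forall k, (1 <= k <= n)%nat ->
     (exists d, has_partial (kahan n a eps i) x k d) /\
     (exists d, has_partial (kahan n a eps j) x k d)) /\
  (forall Df Dg : nat -> R,
     (forall k, (1 <= k <= n)%nat -> has_partial (kahan n a eps i) x k (Df k)) ->
     (forall k, (1 <= k <= n)%nat -> has_partial (kahan n a eps j) x k (Dg k)) ->
     pbracket n x Df Dg = kahan n a eps i x * kahan n a eps j x).
Proof.
  assert (Hpartial : forall m k, (1 <= m <= n)%nat -> (1 <= k)%nat ->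
            has_partial (kahan n a eps m) x k (kahan_grad n a eps x m k))
    by (intros; apply has_partial_kahan; try apply hdom; lia).
  split.
  - intros k Hk. split; eexists; apply Hpartial; lia.
  - intros Df Dg HDf HDg.
    rewrite (pbracket_ext n x Df (kahan_grad n a eps x i) Dg (kahan_grad n a eps x j)).
    + apply pbracket_kahan_grad; try apply hdom; lia.
    + intros k Hk. eapply uniqueness_limite; [apply HDf | apply Hpartial]; lia.
    + intros k Hk. eapply uniqueness_limite; [apply HDg | apply Hpartial]; lia.
Qed.
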